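(* Let $\mathcal V$ be a finite set, $2\le k\le|\mathcal V|-2$, and suppose that the code $\Gamma\subset\binom{\mathcal V}{k}$ admits a subgroup $G\le{\rm Aut}(\Gamma)\cap{\rm Sym}(\mathcal V)$ such that $\Gamma$ is $G$-neighbour-transitive and $G$ is intransitive on $\mathcal V$. Then there is a proper non-empty subset $\mathcal U\subset\mathcal V$ such that: $\Gamma$ is the set of all $k$-subsets of $\mathcal U$ if $|\mathcal U|>k$; $\Gamma=\{\mathcal U\}$ if $|\mathcal U|=k$; $\Gamma$ is the set of all $k$-subsets of $\mathcal V$ containing $\mathcal U$ if $|\mathcal U|<k$.
   Context: The Johnson graph $J(|\mathcal V|,k)$ has vertex set $\binom{\mathcal V}{k}$, the $k$-subsets of $\mathcal V$, two being adjacent iff they meet in $k-1$ points. A code is a proper non-empty subset $\Gamma\subset\binom{\mathcal V}{k}$; its neighbour set $\Gamma_1$ is the set of $k$-subsets not in $\Gamma$ adjacent to some codeword. ${\rm Aut}(\Gamma)$ is the setwise stabiliser of $\Gamma$ in ${\rm Aut}(J(|\mathcal V|,k))$. $\Gamma$ is $G$-neighbour-transitive if $G$ is transitive on both $\Gamma$ and $\Gamma_1$. *)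

From mathcomp Require Import all_boot all_fingroup.
Set Implicit Arguments. Unset Strict Implicit. Unset Printing Implicit Defensive.

Definition ksubsets (V : finType) (k : nat) : {set {set V}} :=
  [set A : {set V} | #|A| == k].

Definition johnson_adj (V : finType) (k : nat) (A B : {set V}) : bool :=
  [&& #|A| == k, #|B| == k & #|A :&: B| == k.-1].

Definition neighbours (V : finType) (k : nat) (Gam : {set {set V}})
  : {set {set V}} :=
  [set B in ksubsets V k | (B \notin Gam) && [exists A in Gam, johnson_adj k A B]].

Definition is_code (V : finType) (k : nat) (Gam : {set {set V}}) : Prop :=
  Gam != set0 /\ Gam \proper ksubsets V k.

Definition neighbour_transitive (V : finType) (k : nat)
  (G : {group {perm V}}) (Gam : {set {set V}}) : Prop :=
  [transitive G, on Gam | 'P^*] /\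
  [transitive G, on neighbours k Gam | 'P^*].

(* Let D be the G-orbit of a point of some codeword.  As G fixes D and is
   transitive on Gamma and on its neighbours, all codewords meet D in the same
   number i of points and all neighbours in the same number j.  Exchanging a
   point of a codeword for a point outside it gives an adjacent k-set.  If
   j <> i, exchanges within D or within its complement never leave Gamma, so
   Gamma consists of all k-sets meeting D in i points; if also j <> i - 1, no
   codeword can trade a point of D for a point outside D, so each codeword is
   disjoint from D or contains U := V \ D, and Gamma has one of the three
   shapes.  If j = i - 1 the same argument applies to V \ D instead of D, and
   j = i would make every codeword disjoint from or contain each of D and
   V \ D, which is impossible for 0 < k < |V|. *)

From mathcomp Require Import all_boot all_fingroup zify.
Set Implicit Arguments. Unset Strict Implicit. Unset Printing Implicit Defensive.

Section Exchange.
Variable V : finType.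
Implicit Types (A C E X : {set V}) (a b : V).

Definition swap A a b : {set V} := b |: (A :\ a).

Lemma card_swap A a b : a \in A -> b \notin A -> #|swap A a b| = #|A|.
Proof. by move=> aA bA; rewrite cardsU1 !inE (negbTE bA) andbF (cardsD1 a A) aA. Qed.

Lemma johnson_adj_swap A a b :
  a \in A -> b \notin A -> johnson_adj #|A| A (swap A a b).
Proof.
move=> aA bA; rewrite /johnson_adj card_swap // eqxx.
have -> : A :&: swap A a b = A :\ a.
  apply/setP=> y; rewrite !inE; case: (y =P b) => [->|_] /=.
    by rewrite (negbTE bA) andbF.
  by rewrite andbCA andbb.
by rewrite (cardsD1 a A) aA add1n eqxx.
Qed.

Lemma cardsU1I E X b : b \notin X -> #|(b |: X) :&: E| = (b \in E) + #|X :&: E|.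
Proof.
move=> bX; rewrite setIUl; case bE: (b \in E).
  by rewrite (setIidPl _) ?sub1set // cardsU1 !inE (negbTE bX).
by rewrite (_ : _ :&: E = set0) ?set0U //; apply/eqP; rewrite setI_eq0 disjoints1 bE.
Qed.

Lemma card_swapI E A a b : a \in A -> b \notin A ->
  #|swap A a b :&: E| + (a \in E) = #|A :&: E| + (b \in E).
Proof.
move=> aA bA; rewrite -{2}(setD1K aA) /swap !cardsU1I ?setD11 //; last first.
  by rewrite !inE (negbTE bA) andbF.
lia.
Qed.

Lemma cardsDI_eq F A C :
  #|C :&: F| = #|A :&: F| -> #|(C :\: A) :&: F| = #|(A :\: C) :&: F|.
Proof.
rewrite !setIDAC -(cardsID A (C :&: F)) -(cardsID C (A :&: F)).
by rewrite setIAC (setIAC A) (setIC C A) => /addnI.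
Qed.

Lemma swap_partner E A C b : #|C| = #|A| -> #|C :&: E| = #|A :&: E| ->
  b \in C :\: A -> exists2 a, a \in A :\: C & (a \in E) = (b \in E).
Proof.
move=> eq_card eq_cnt bCA.
have partner F : #|C :&: F| = #|A :&: F| -> b \in F -> exists2 a, a \in A :\: C & a \in F.
  move=> eqF bF; have /card_gt0P [a] : 0 < #|(A :\: C) :&: F|.
    by rewrite -(cardsDI_eq eqF); apply/card_gt0P; exists b; rewrite inE bCA.
  by rewrite inE => /andP [aAC aF]; exists a.
case bE: (b \in E); first by have [a aAC aE] := partner E eq_cnt bE; exists a.
have [||a aAC] := partner (~: E); last by rewrite inE => /negbTE; exists a.
- by rewrite -!setDE; have := cardsID E C; have := cardsID E A; lia.
- by rewrite inE bE.
Qed.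

Definition swap_closed (P : {set {set V}}) E := forall X a b,
  X \in P -> a \in X -> b \notin X -> (a \in E) = (b \in E) -> swap X a b \in P.

Lemma swap_closed_mem (P : {set {set V}}) E A C : swap_closed P E ->
  A \in P -> #|C| = #|A| -> #|C :&: E| = #|A :&: E| -> C \in P.
Proof.
move=> closedP; move def_n: #|C :\: A| => n.
elim: n A def_n => [|n IHn] A def_n AP eq_card eq_cnt.
  have sCA : C \subset A by rewrite -setD_eq0 -cards_eq0 def_n.
  suff -> : C = A by [].
  by apply/eqP; rewrite eqEcard sCA eq_card leqnn.
have [b bCA] : exists b, b \in C :\: A by apply/card_gt0P; rewrite def_n.
have [a aAC abE] := swap_partner eq_card eq_cnt bCA.
have [aC aA] : a \notin C /\ a \in A by move: aAC; rewrite inE => /andP.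
have [bA bC] : b \notin A /\ b \in C by move: bCA; rewrite inE => /andP.
apply: (IHn (swap A a b)); rewrite ?card_swap //; last 2 first.
- exact: closedP.
- by have := card_swapI E aA bA; rewrite abE eq_cnt; lia.
have -> : C :\: swap A a b = (C :\: A) :\ b.
  apply/setP=> y; rewrite !inE; case: (y =P a) => [->|_]; first by rewrite (negbTE aC) !andbF.
  by rewrite /= negb_or andbA.
by move: def_n; rewrite (cardsD1 b) bCA => [[]].
Qed.

End Exchange.

Definition determined_by_subset (V : finType) k (Gam : {set {set V}}) U :=
  [/\ U != set0, U \proper [set: V],
      (k < #|U| -> Gam = [set A in ksubsets V k | A \subset U]),
      (#|U| = k -> Gam = [set U]) &
      (#|U| < k -> Gam = [set A in ksubsets V k | U \subset A])].

Section SubsetCodes.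
Variables (V : finType) (k : nat) (Gam : {set {set V}}) (U : {set V}).
Hypotheses (U_neq0 : U != set0) (U_proper : U \proper [set: V]).

Lemma ksubsets_sub1 : #|U| = k -> [set A in ksubsets V k | A \subset U] = [set U].
Proof.
move=> cU; apply/setP=> A; rewrite !inE; apply/andP/eqP => [[/eqP cA sAU] | ->].
  by apply/eqP; rewrite eqEcard sAU cU cA leqnn.
by rewrite cU eqxx.
Qed.

Lemma ksubsets_sup1 : #|U| = k -> [set A in ksubsets V k | U \subset A] = [set U].
Proof.
move=> cU; apply/setP=> A; rewrite !inE; apply/andP/eqP => [[/eqP cA sUA] | ->].
  by apply/esym/eqP; rewrite eqEcard sUA cU cA leqnn.
by rewrite cU eqxx.
Qed.

Lemma determined_by_subsets : k <= #|U| ->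
  Gam = [set A in ksubsets V k | A \subset U] -> determined_by_subset k Gam U.
Proof.
by move=> kU GamE; split=> // [cU|]; [rewrite GamE ksubsets_sub1 | rewrite ltnNge kU].
Qed.

Lemma determined_by_supersets : #|U| <= k ->
  Gam = [set A in ksubsets V k | U \subset A] -> determined_by_subset k Gam U.
Proof.
by move=> Uk GamE; split=> // [|cU]; [rewrite ltnNge Uk | rewrite GamE ksubsets_sup1].
Qed.

End SubsetCodes.

Lemma mem_neighbours (V : finType) k (Gam : {set {set V}}) A B :
  A \in Gam -> johnson_adj k A B -> B \notin Gam -> B \in neighbours k Gam.
Proof.
move=> AG adj BG; rewrite !inE BG; case/and3P: (adj) => _ -> _ /=.
by apply/existsP; exists A; rewrite AG.
Qed.

Section ConstantIntersection.
Variables (V : finType) (k : nat) (Gam : {set {set V}}) (E : {set V}) (i j : nat).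
Hypothesis code_card : forall A, A \in Gam -> #|A| = k.
Hypothesis code_cardI : forall A, A \in Gam -> #|A :&: E| = i.
Hypothesis neighbour_cardI : forall A B,
  A \in Gam -> johnson_adj k A B -> B \notin Gam -> #|B :&: E| = j.

Lemma johnson_adj_code_swap A a b : A \in Gam -> a \in A -> b \notin A ->
  johnson_adj k A (swap A a b).
Proof. by move=> AG; rewrite -(code_card AG); apply: johnson_adj_swap. Qed.

Lemma code_swap_closed : j != i -> swap_closed Gam E.
Proof.
move=> ji X a b XG aX bX abE; apply: contraT => sXG.
have := card_swapI E aX bX.
rewrite abE (neighbour_cardI XG (johnson_adj_code_swap XG aX bX) sXG) code_cardI //.
by move/addIn/eqP; rewrite (negbTE ji).
Qed.

Lemma codeE A0 : j != i -> A0 \in Gam ->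
  Gam = [set C in ksubsets V k | #|C :&: E| == i].
Proof.
move=> ji A0G; apply/setP=> C; rewrite !inE.
apply/idP/andP => [CG | [/eqP cC /eqP cCE]]; first by rewrite (code_card CG) (code_cardI CG).
by apply: (swap_closed_mem (code_swap_closed ji) A0G); rewrite ?(code_card A0G) ?(code_cardI A0G).
Qed.

Lemma code_separated A : j.+1 != i -> A \in Gam -> [disjoint A & E] || (~: E \subset A).
Proof.
move=> j1i AG; case: (boolP [disjoint A & E]) => //=.
rewrite -setI_eq0 => /set0Pn [a]; rewrite inE => /andP [aA aE].
apply/subsetP => b; rewrite inE => bE; apply: contraT => bA.
have := card_swapI E aA bA; rewrite aE (negbTE bE) (code_cardI AG).
case: (boolP (swap A a b \in Gam)) => [sG | sG]; first by rewrite code_cardI //; lia.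
by rewrite (neighbour_cardI AG (johnson_adj_code_swap AG aA bA) sG); move: j1i; lia.
Qed.

Lemma code_cardIC A : A \in Gam -> #|A :&: ~: E| = k - i.
Proof. by move=> AG; rewrite -setDE -(code_card AG) -(cardsID E A) code_cardI // addKn. Qed.

Lemma neighbour_cardIC A B :
  A \in Gam -> johnson_adj k A B -> B \notin Gam -> #|B :&: ~: E| = k - j.
Proof.
move=> AG adj BG; case/and3P: (adj) => _ /eqP cB _.
by rewrite -setDE -cB -(cardsID E B) (neighbour_cardI AG adj BG) addKn.
Qed.

Lemma code_determined A0 : j != i -> j.+1 != i -> A0 \in Gam ->
  E != set0 -> ~: E != set0 -> determined_by_subset k Gam (~: E).
Proof.
move=> ji j1i A0G E0 EC0.
have EC_proper : ~: E \proper [set: V] by rewrite properT -setC0 (inj_eq (@setC_inj _)).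
rewrite (codeE ji A0G); case/orP: (code_separated j1i A0G) => [dA0 | sA0].
- have i0 : i = 0 by rewrite -(code_cardI A0G); apply/eqP; rewrite cards_eq0 setI_eq0.
  apply: determined_by_subsets => //.
    by rewrite -(code_card A0G) subset_leq_card // -disjoints_subset.
  by apply/setP=> C; rewrite !inE i0 cards_eq0 setI_eq0 disjoints_subset.
- apply: determined_by_supersets => //; first by rewrite -(code_card A0G) subset_leq_card.
  apply/setP=> C; rewrite !inE; case: (eqVneq #|C| k) => //= cC.
  have cCE : #|C :&: E| + #|C :&: ~: E| = k by rewrite -setDE cardsID.
  have cEC : #|~: E| = k - i by rewrite -(code_cardIC A0G) (setIidPr sA0).
  have i_le_k : i <= k by rewrite -(code_cardI A0G) -(code_card A0G) subset_leq_card ?subsetIl.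
  transitivity (#|C :&: ~: E| == #|~: E|); first by apply/eqP/eqP; lia.
  by rewrite (subset_leqif_cards (subsetIr C _)).2 (sameP eqP setIidPr).
Qed.

End ConstantIntersection.

Lemma separated_cardI (V : finType) (A E : {set V}) :
  [disjoint A & E] || (~: E \subset A) ->
  (#|A :&: E| == 0) || (#|A :&: ~: E| == #|~: E|).
Proof. by case/orP=> [dAE | /setIidPr ->]; rewrite ?eqxx ?orbT // cards_eq0 setI_eq0 dAE. Qed.

Lemma constant_intersection_code (V : finType) k (Gam : {set {set V}}) E i j :
  (forall A, A \in Gam -> #|A| = k) ->
  (forall A, A \in Gam -> #|A :&: E| = i) ->
  (forall A B, A \in Gam -> johnson_adj k A B -> B \notin Gam -> #|B :&: E| = j) ->
  0 < k < #|V| -> Gam != set0 -> E != set0 -> ~: E != set0 ->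
  exists U, determined_by_subset k Gam U.
Proof.
move=> Gam_k GamE NbE /andP [k_gt0 k_lt] /set0Pn [A0 A0G] E0 EC0.
have GamEC := code_cardIC Gam_k GamE; have NbEC := neighbour_cardIC NbE.
have i_le_k : i <= k by rewrite -(GamE _ A0G) -(Gam_k _ A0G) subset_leq_card ?subsetIl.
have [ji | ji] := eqVneq j i.
  have /(code_separated Gam_k GamE NbE)/(_ A0G)/separated_cardI sepE : j.+1 != i.
    by apply/eqP; lia.
  have /(code_separated Gam_k GamEC NbEC)/(_ A0G)/separated_cardI sepEC :
    (k - j).+1 != k - i by apply/eqP; lia.
  rewrite setCK in sepEC; rewrite -card_gt0 in E0; rewrite -card_gt0 in EC0.
  have := cardsC E; move: (GamE _ A0G) (GamEC _ A0G).
  by case/orP: sepE => /eqP; case/orP: sepEC => /eqP; lia.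
have [j1i | j1i] := eqVneq j.+1 i.
  exists (~: ~: E); apply: (code_determined Gam_k GamEC NbEC _ _ A0G) => //; rewrite ?setCK //; lia.
by exists (~: E); apply: (code_determined Gam_k GamE NbE _ _ A0G).
Qed.

Lemma atrans_neq0 (aT : finGroupType) (D : {group aT}) (rT : finType)
  (to : action D rT) (G : {group aT}) (S : {set rT}) :
  [transitive G, on S | to] -> S != set0.
Proof. by case/imsetP=> x xS _; apply/set0Pn; exists x. Qed.

Lemma atrans_cardI (V : finType) (G : {group {perm V}}) (S : {set {set V}}) E A B :
  [transitive G, on S | 'P^*] -> G \subset 'N(E | 'P)%g -> A \in S -> B \in S ->
  #|A :&: E| = #|B :&: E|.
Proof.
move=> trS nEG AS BS; have [g gG ->] := atransP2 trS AS BS.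
rewrite -{2}(astabs_setact (subsetP nEG g gG)) !setactE -imsetI ?card_imset //.
  exact: act_inj.
by move=> x y _ _; apply: act_inj.
Qed.

Theorem proposition3p3 (V : finType) (k : nat) (Gam : {set {set V}})
  (G : {group {perm V}}) :
  2 <= k -> k <= #|V| - 2 ->
  is_code k Gam ->
  G \subset ('N(Gam | 'P^*))%g ->
  neighbour_transitive k G Gam ->
  ~~ [transitive G, on [set: V] | 'P] ->
  exists U : {set V},
    [/\ U != set0, U \proper [set: V],
        (k < #|U| -> Gam = [set A in ksubsets V k | A \subset U]),
        (#|U| = k -> Gam = [set U]) &
        (#|U| < k -> Gam = [set A in ksubsets V k | U \subset A])].
Proof.
(* G normalising Gam already follows from transitivity. *)
move=> k_ge2 k_le [Gam_neq0 Gam_proper] _ [trGam trNb] intransG.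
have Gam_k A : A \in Gam -> #|A| = k.
  by move/(subsetP (proper_sub Gam_proper)); rewrite inE => /eqP.
have [A0 A0G] := set0Pn _ Gam_neq0.
have [B0 B0N] := set0Pn _ (atrans_neq0 trNb).
have [x xA0] : exists x, x \in A0 by apply/card_gt0P; rewrite Gam_k //; lia.
pose D := orbit 'P G x.
have nDG : G \subset 'N(D | 'P)%g := acts_orbit _ x (subsetT G).
apply: (@constant_intersection_code _ _ _ D #|A0 :&: D| #|B0 :&: D| Gam_k) => //.
- by move=> A AG; apply: atrans_cardI trGam nDG AG A0G.
- by move=> A B AG adj BG; apply: atrans_cardI trNb nDG (mem_neighbours AG adj BG) B0N.
- by apply/andP; split; lia.
- by apply/set0Pn; exists x; apply: orbit_refl.
apply: contra intransG => /eqP DC0.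
by rewrite (_ : [set: V] = D) ?atrans_orbit // -setC0 -DC0 setCK.
Qed.
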